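(* In the setting of the context, suppose $\mathbb{P}(q(\mathcal{X})<1)>0$, and let $B\ge2$ be an integer with $(B+1)\alpha\in\mathbb{N}$. Then $k_B-k_{B-1}=1$ and $k_{B+1}-k_B=0$, and consequently $\mathrm{Pow}(B-1)<\mathrm{Pow}(B)$ and $\mathrm{Pow}(B+1)<\mathrm{Pow}(B)$.
   Context: Let $\mathcal{X}$ be a random observed dataset taking values in a space on which a finite group $\mathcal{G}$ acts (write $\mathcal{X}^\pi$ for the action of $\pi\in\mathcal{G}$; the identity of $\mathcal{G}$ fixes every dataset), and let $T$ be a real-valued test statistic. Fix $\alpha\in(0,1)$. For an integer $B\ge1$, let $\pi_1,\dots,\pi_B$ be i.i.d. uniform on $\mathcal{G}$, independent of $\mathcal{X}$. The Monte Carlo permutation $p$-value is $p_B(\mathcal{X})=\bigl(1+\sum_{i=1}^B \mathbf{1}\{T(\mathcal{X}^{\pi_i})\ge T(\mathcal{X})\}\bigr)/(B+1)$, and the test rejects iff $p_B(\mathcal{X})\le\alpha$. Define $q(\mathcal{X})=\mathbb{P}(T(\mathcal{X}^\pi)\ge T(\mathcal{X})\mid \mathcal{X})$ for $\pi$ uniform on $\mathcal{G}$ independent of $\mathcal{X}$ (so $q(\mathcal{X})\in[1/|\mathcal{G}|,1]$), $R_B=\sum_{i=1}^B \mathbf{1}\{T(\mathcal{X}^{\pi_i})\ge T(\mathcal{X})\}$ (so $R_B\mid\mathcal{X}\sim\mathrm{Binomial}(B,q(\mathcal{X}))$), and the critical count $k_B=\lfloor (B+1)\alpha\rfloor-1$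 for integers $B\ge 0$. Then $\{p_B(\mathcal{X})\le\alpha\}=\{R_B\le k_B\}$. The conditional rejection probability is $\phi_B(\mathcal{X})=\mathbb{P}(R_B\le k_B\mid\mathcal{X})$ and the (unconditional) power is $\mathrm{Pow}(B)=\mathbb{E}[\phi_B(\mathcal{X})]=\mathbb{E}\bigl[\mathbb{P}(\mathrm{Binomial}(B,q(\mathcal{X}))\le k_B\mid\mathcal{X})\bigr]$, for $B\ge1$. *)

From HB Require Import structures.
From mathcomp Require Import all_boot all_order all_algebra all_fingroup.
From mathcomp Require Import all_classical all_reals all_analysis.
Set Implicit Arguments. Unset Strict Implicit. Unset Printing Implicit Defensive.
Import Order.TTheory GRing.Theory Num.Theory.
Local Open Scope ring_scope.

Definition is_group_action (gT : finGroupType) (D : Type) (act : D -> gT -> D) :=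
  (forall x, act x 1%g = x) /\ (forall x g h, act (act x g) h = act x (g * h)%g).

(* q(x) = P(T(x^pi) >= T(x)) for pi uniform on the finite group gT. *)
Definition qfun (R : realType) (gT : finGroupType) (D : Type)
  (act : D -> gT -> D) (T : D -> R) (x : D) : R :=
  #|[set g : gT | T x <= T (act x g)]|%:R / #|gT|%:R.

Definition kB (R : realType) (alpha : R) (B : nat) : int :=
  Num.floor (B.+1%:R * alpha) - 1.

Definition binom_cdf (R : realType) (B : nat) (q : R) (k : int) : R :=
  \sum_(j < B.+1 | (j%:Z <= k)%R) 'C(B, j)%:R * q ^+ j * (1 - q) ^+ (B - j).

Definition phiB (R : realType) (gT : finGroupType) (D : Type)
  (act : D -> gT -> D) (T : D -> R) (alpha : R) (B : nat) (x : D) : R :=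
  binom_cdf B (qfun act T x) (kB alpha B).

Definition Pow (R : realType) (d : measure_display) (Omega : measurableType d)
  (P : probability Omega R) (gT : finGroupType) (D : Type)
  (act : D -> gT -> D) (T : D -> R) (X : Omega -> D) (alpha : R) (B : nat)
  : \bar R :=
  (\int[P]_w (phiB act T alpha B (X w))%:E)%E.

(* With (B+1)alpha = m+1 the critical counts are k_(B-1) = m-1 and
   k_B = k_(B+1) = m.  Splitting off the last Bernoulli trial gives,
   pointwise in q,
     P(Bin(B,q) <= m) - P(Bin(B-1,q) <= m-1) = (1-q) P(Bin(B-1,q) = m),
     P(Bin(B,q) <= m) - P(Bin(B+1,q) <= m)   = q P(Bin(B,q) = m).
   Since q(x) is a multiple of 1/|G| lying in [1/|G|, 1], both right-hand
   sides are nonnegative everywhere and bounded below by a positive constant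
   on the event {q(X) < 1}; as this event has positive probability, the
   expected rejection probabilities are strictly ordered. *)
From HB Require Import structures.
From mathcomp Require Import all_boot all_order all_algebra all_fingroup.
From mathcomp Require Import all_classical all_reals all_analysis.
From mathcomp Require Import measurable_realfun.
From mathcomp Require Import zify ring lra.
Import Order.TTheory GRing.Theory Num.Theory.
Set Implicit Arguments.
Unset Strict Implicit.
Unset Printing Implicit Defensive.
Local Open Scope classical_set_scope.
Local Open Scope ring_scope.

Section Binomial.
Variable R : realType.
Implicit Types (q a : R) (B j m : nat) (k : int).

Definition binom_pmf B q j : R := 'C(B, j)%:R * q ^+ j * (1 - q) ^+ (B - j).

Lemma binom_cdfE B q k :
  binom_cdf B q k = \sum_(j < B.+1) if j%:Z <= k then binom_pmf B q j else 0.
Proof. exact: big_mkcond. Qed.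

Lemma binom_cdf_neg B q k : k < 0 -> binom_cdf B q k = 0.
Proof.
move=> k_lt0; rewrite /binom_cdf big_pred0 // => j.
by rewrite leNgt (lt_le_trans k_lt0).
Qed.

Lemma binom_cdf_step B q m : (m <= B)%N ->
  binom_cdf B q m = binom_cdf B q (m%:Z - 1) + binom_pmf B q m.
Proof.
move=> mB; rewrite /binom_cdf (bigD1 (Ordinal (mB : m < B.+1)%N)) //= addrC.
congr (_ + _); apply: eq_bigl => j; rewrite -val_eqE /=.
by apply/andP/idP => [[]|]; lia.
Qed.

Lemma binom_cdfS B q m : (m <= B)%N ->
  binom_cdf B.+1 q m = binom_cdf B q m - q * binom_pmf B q m.
Proof.
elim: m => [|m IHm] mB.
  rewrite !binom_cdf_step // !binom_cdf_neg // /binom_pmf !bin0 !subn0 exprS.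
  ring.
rewrite (binom_cdf_step q (leqW mB)) (binom_cdf_step q mB).
have -> : m.+1%:Z - 1 = m by lia.
rewrite IHm 1?ltnW // /binom_pmf binS natrD subSS.
have -> : (B - m = (B - m.+1).+1)%N by lia.
rewrite !exprS; ring.
Qed.

Lemma binom_pmf_ge0 B q j : 0 <= q <= 1 -> 0 <= binom_pmf B q j.
Proof. by case/andP=> q0 q1; rewrite !mulr_ge0 ?exprn_ge0 // subr_ge0. Qed.

Lemma binom_pmf_ge B q j a : (j <= B)%N -> 0 <= a -> a <= q -> a <= 1 - q ->
  'C(B, j)%:R * a ^+ B <= binom_pmf B q j.
Proof.
move=> jB a0 aq a1q; rewrite /binom_pmf -(subnKC jB) exprD -!mulrA subnKC //.
rewrite ler_wpM2l // ler_pM ?exprn_ge0 ?lerXn2r // ?nnegrE //; lra.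
Qed.

Lemma binom_cdf_pred_gap B q m : (m <= B)%N ->
  binom_cdf B.+1 q m - binom_cdf B q (m%:Z - 1) = (1 - q) * binom_pmf B q m.
Proof. by move=> mB; rewrite binom_cdfS // (binom_cdf_step q mB); ring. Qed.

Lemma binom_cdf_succ_gap B q m : (m <= B)%N ->
  binom_cdf B q m - binom_cdf B.+1 q m = q * binom_pmf B q m.
Proof. by move=> mB; rewrite binom_cdfS //; ring. Qed.

Lemma binom_cdf_pred_le B q m : (m <= B)%N -> 0 <= q <= 1 ->
  binom_cdf B q (m%:Z - 1) <= binom_cdf B.+1 q m.
Proof.
move=> mB q01; rewrite -subr_ge0 binom_cdf_pred_gap //.
by rewrite mulr_ge0 ?binom_pmf_ge0 // subr_ge0; case/andP: q01.
Qed.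

Lemma binom_cdf_succ_le B q m : (m <= B)%N -> 0 <= q <= 1 ->
  binom_cdf B.+1 q m <= binom_cdf B q m.
Proof.
move=> mB q01; rewrite -subr_ge0 binom_cdf_succ_gap //.
by rewrite mulr_ge0 ?binom_pmf_ge0 //; case/andP: q01.
Qed.

Lemma binom_cdf_pred_gap_ge B q m a :
  (m <= B)%N -> 0 <= a -> a <= q -> a <= 1 - q ->
  a * ('C(B, m)%:R * a ^+ B) <= binom_cdf B.+1 q m - binom_cdf B q (m%:Z - 1).
Proof.
move=> mB a0 aq a1q; rewrite binom_cdf_pred_gap //.
by rewrite ler_pM ?binom_pmf_ge // mulr_ge0 ?exprn_ge0.
Qed.

Lemma binom_cdf_succ_gap_ge B q m a :
  (m <= B)%N -> 0 <= a -> a <= q -> a <= 1 - q ->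
  a * ('C(B, m)%:R * a ^+ B) <= binom_cdf B q m - binom_cdf B.+1 q m.
Proof.
move=> mB a0 aq a1q; rewrite binom_cdf_succ_gap //.
by rewrite ler_pM ?binom_pmf_ge // mulr_ge0 ?exprn_ge0.
Qed.

Lemma binom_cdf_ge0 B q k : 0 <= q <= 1 -> 0 <= binom_cdf B q k.
Proof. by move=> q01; apply: sumr_ge0 => j _; exact: binom_pmf_ge0. Qed.

Lemma binom_cdf_le1 B q k : 0 <= q <= 1 -> binom_cdf B q k <= 1.
Proof.
move=> q01; rewrite -(expr1n R B) -{1}(subrK q 1) exprDn.
rewrite binom_cdfE; apply: ler_sum => j _.
have -> : (1 - q) ^+ (B - j) * q ^+ j *+ 'C(B, j) = binom_pmf B q j.
  by rewrite /binom_pmf -mulr_natl; ring.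
by case: ifP => // _; exact: binom_pmf_ge0.
Qed.

End Binomial.

Lemma measurable_binom_cdf d (Omega : measurableType d) (R : realType)
    (Q : Omega -> R) B k :
  measurable_fun setT Q -> measurable_fun setT (fun w => binom_cdf B (Q w) k).
Proof.
move=> mQ; rewrite (funext (fun w => binom_cdfE B (Q w) k)).
apply: measurable_sum => j; case: (j%:Z <= k); last exact: measurable_cst.
apply: measurable_funM; last by apply/measurable_funX/measurable_funB.
by apply: measurable_funM; [exact: measurable_cst | exact: measurable_funX].
Qed.

Section StrictIntegral.
Context d (Omega : measurableType d) (R : realType) (P : probability Omega R).

Lemma bounded_integrable (h : Omega -> R) M :
  measurable_fun setT h -> (forall w, `|h w| <= M) ->
  P.-integrable setT (EFin \o h).
Proof.
move=> mh hM; apply: measurable_bounded_integrable => //.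
  exact: le_lt_trans (probability_le1 P measurableT) (ltry 1).
rewrite /bounded_near; near=> M' => w _ /=; apply: le_trans (hM w) _.
by near: M'; apply: nbhs_pinfty_ge; rewrite num_real.
Unshelve. all: by end_near.
Qed.

Lemma lt_integral_gap (h1 h2 : Omega -> R) (S : set Omega) M c :
  measurable_fun setT h1 -> measurable_fun setT h2 ->
  (forall w, `|h1 w| <= M) -> (forall w, `|h2 w| <= M) ->
  (forall w, h1 w <= h2 w) -> measurable S -> (0 < P S)%E -> 0 < c ->
  (forall w, S w -> c <= h2 w - h1 w) ->
  (\int[P]_w (h1 w)%:E < \int[P]_w (h2 w)%:E)%E.
Proof.
move=> m1 m2 b1 b2 h12 mS PS c_gt0 gap.
have i1 := bounded_integrable m1 b1; have i2 := bounded_integrable m2 b2.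
have i21 := integrableB measurableT i2 i1.
have -> : (\int[P]_w (h2 w)%:E =
    \int[P]_w ((EFin \o h1) w + ((EFin \o h2) \- (EFin \o h1)) w))%E.
  by apply: eq_integral => w _ /=; rewrite -EFinD subrKC.
rewrite integralD // lteDl; last exact: integrable_fin_num.
have -> : (0 = c%:E * 0)%E by rewrite mule0.
apply: (@lt_le_trans _ _ (c%:E * P S)%E); first by rewrite lte_pmul2l.
have -> : (c%:E * P S = \int[P]_w (c%:E * (\1_S w)%:E))%E.
  rewrite ge0_integralZl_EFin ?integral_indic ?setIT //; last exact: ltW.
  by apply/measurable_EFinP; exact: measurable_indic.
apply: ge0_le_integral => //.
- by move=> w _; rewrite -EFinM lee_fin mulr_ge0 // ltW.
- by apply/measurable_EFinP/measurable_funM => //; exact: measurable_indic.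
- exact: measurable_int i21.
move=> w _ /=; rewrite -EFinM -EFinB lee_fin /indic.
case: (boolP (w \in S)) => [/set_mem /gap|_]; first by rewrite mulr1.
by rewrite mulr0 subr_ge0.
Qed.

End StrictIntegral.

Section PermutationQuantile.
Variables (R : realType) (D : Type) (gT : finGroupType).
Variables (act : D -> gT -> D) (T : D -> R).
Hypothesis act1 : forall x, act x 1%g = x.

Let card_gT_gt0 : (0 < #|gT|)%N.
Proof. by apply/card_gt0P; exists 1%g. Qed.

Let card_ge_gt0 x : (0 < #|[set g : gT | (T x <= T (act x g))%R]%SET|)%N.
Proof. by apply/card_gt0P; exists 1%g; rewrite inE /= act1. Qed.

Lemma qfun_ge_inv_card x : #|gT|%:R^-1 <= qfun act T x.
Proof.
rewrite /qfun -[leLHS]mul1r ler_pM2r ?invr_gt0 ?ltr0n // ler1n.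
exact: card_ge_gt0.
Qed.

Lemma qfun_ge0 x : 0 <= qfun act T x.
Proof. by rewrite /qfun divr_ge0. Qed.

Lemma qfun_le1 x : qfun act T x <= 1.
Proof. by rewrite /qfun ler_pdivrMr ?ltr0n // mul1r ler_nat max_card. Qed.

Lemma qfun_lt1_gap x : qfun act T x < 1 -> #|gT|%:R^-1 <= 1 - qfun act T x.
Proof.
rewrite /qfun ltr_pdivrMr ?ltr0n // mul1r ltr_nat => lt_card.
have card_neq0 : #|gT|%:R != 0 :> R by rewrite pnatr_eq0 -lt0n.
rewrite -[X in X - _](divff card_neq0) -mulrBl -natrB; last exact: ltnW.
by rewrite -[leLHS]mul1r ler_wpM2r ?invr_ge0 ?ler0n // ler1n subn_gt0.
Qed.

End PermutationQuantile.

Lemma floor_natD (R : archiRealFieldType) (n : nat) (x : R) :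
  0 <= x < 1 -> Num.floor (n%:R + x) = n.
Proof.
case/andP=> x_ge0 x_lt1; apply: floor_def.
by rewrite intrD -!pmulrn; apply/andP; split; lra.
Qed.

Lemma kB_at_integer_level (R : realType) (alpha : R) B n :
  0 < alpha < 1 -> B.+1%:R * alpha = n%:R ->
  exists2 m, (m < B)%N &
    [/\ kB alpha B = m, kB alpha B.-1 = m%:Z - 1 & kB alpha B.+1 = m].
Proof.
move=> /andP[alpha_gt0 alpha_lt1] Bn.
have n_gt0 : (0 < n)%N by rewrite -(ltr0n R) -Bn mulr_gt0.
have n_le : (n <= B)%N.
  by rewrite -ltnS -(ltr_nat R) -Bn -[ltRHS]mulr1 ltr_pM2l.
case: B Bn n_le => [|B] Bn n_le; first lia.
exists n.-1; first lia.
have nE : n%:R = n.-1%:R + 1 :> R by rewrite natr1 prednK.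
split; rewrite /kB /=.
- by rewrite Bn -[n%:R]addr0 floor_natD ?lexx ?ltr01 //; lia.
- have -> : B.+1%:R * alpha = n.-1%:R + (1 - alpha).
    by move: Bn; rewrite nE -natr1 mulrDl mul1r; lra.
  by rewrite floor_natD //; apply/andP; split; lra.
- have -> : B.+3%:R * alpha = n%:R + alpha by rewrite -Bn -natr1 mulrDl mul1r.
  by rewrite floor_natD //; [lia | apply/andP; split; lra].
Qed.

Section PowerComparison.
Context (R : realType) d (Omega : measurableType d) (P : probability Omega R).
Context dD (D : measurableType dD) (gT : finGroupType).
Variables (act : D -> gT -> D) (T : D -> R) (X : Omega -> D) (alpha : R).
Hypotheses (mX : measurable_fun setT X) (mT : measurable_fun setT T).
Hypothesis mact : forall g : gT, measurable_fun setT (fun x => act x g).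
Hypothesis q_lt1_pos : (0 < P [set w | (qfun act T (X w) < 1)%R])%E.

Lemma measurable_qfun : measurable_fun setT (qfun act T).
Proof.
have -> : qfun act T = fun x =>
    (\sum_(g : gT) (if T x <= T (act x g) then 1 else 0)) * #|gT|%:R^-1 :> R.
  apply: funext => x; rewrite /qfun -sum1_card natr_sum big_mkcond /=.
  by congr (_ * _); apply: eq_bigr => g _; rewrite inE; case: ifP.
apply/measurable_funM/measurable_cst; apply: measurable_sum => g.
apply: measurable_fun_ifT; [|exact: measurable_cst|exact: measurable_cst].
by apply: measurable_fun_ler => //; exact: measurableT_comp.
Qed.

Lemma Pow_lt B1 B2 c : 0 < c ->
  (forall x, phiB act T alpha B1 x <= phiB act T alpha B2 x) ->
  (forall x, qfun act T x < 1 ->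
     c <= phiB act T alpha B2 x - phiB act T alpha B1 x) ->
  (Pow P act T X alpha B1 < Pow P act T X alpha B2)%E.
Proof.
move=> c_gt0 phi_le phi_gap.
have mqX := measurableT_comp measurable_qfun mX.
have mphi B := measurable_binom_cdf B (kB alpha B) mqX.
have phi_bnd B w : `|phiB act T alpha B (X w)| <= 1.
  by rewrite ger0_norm ?binom_cdf_le1 ?binom_cdf_ge0 ?qfun_ge0 ?qfun_le1.
have mS : measurable [set w | qfun act T (X w) < 1].
  have /(_ [set true] I) :=
    measurable_fun_ltr mqX (measurable_cst (1 : R)) measurableT.
  by rewrite setTI.
exact: lt_integral_gap (mphi B1) (mphi B2) (phi_bnd B1) (phi_bnd B2)
  (fun w => phi_le (X w)) mS q_lt1_pos c_gt0 (fun w => phi_gap (X w)).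
Qed.

End PowerComparison.

Theorem mainTheorem7 (R : realType) (d : measure_display)
  (Omega : measurableType d) (P : probability Omega R)
  (dD : measure_display) (D : measurableType dD)
  (gT : finGroupType) (act : D -> gT -> D) (T : D -> R) (X : Omega -> D)
  (alpha : R) (B : nat) :
  is_group_action act ->
  measurable_fun setT X ->
  measurable_fun setT T ->
  (forall g : gT, measurable_fun setT (fun x => act x g)) ->
  0 < alpha < 1 ->
  (0 < P [set w | (qfun act T (X w) < 1)%R])%E ->
  (2 <= B)%N ->
  (exists n : nat, B.+1%:R * alpha = n%:R) ->
  kB alpha B - kB alpha B.-1 = 1 /\ kB alpha B.+1 - kB alpha B = 0 /\
  (Pow P act T X alpha B.-1 < Pow P act T X alpha B)%E /\
  (Pow P act T X alpha B.+1 < Pow P act T X alpha B)%E.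
Proof.
move=> [act1 _] mX mT mact alpha01 q_lt1_pos _
  [n /(kB_at_integer_level alpha01) [m mB [kBE kB_predE kB_succE]]].
rewrite kBE kB_predE kB_succE opprB addrC subrK subrr; do 2!split => //.
have PowP := Pow_lt (P := P) (alpha := alpha) mX mT mact q_lt1_pos.
set a : R := #|gT|%:R^-1.
have a_gt0 : 0 < a by rewrite invr_gt0 ltr0n; apply/card_gt0P; exists 1%g.
have a_ge0 := ltW a_gt0.
have q_ge x : a <= qfun act T x := qfun_ge_inv_card T act1 x.
have q01 x : 0 <= qfun act T x <= 1 by rewrite qfun_ge0 qfun_le1.
have c_gt0 C : (m <= C)%N -> 0 < a * ('C(C, m)%:R * a ^+ C).
  by move=> mC; rewrite !mulr_gt0 ?exprn_gt0 // ltr0n bin_gt0.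
split.
- case: B mB kBE kB_predE kB_succE => [|B] // mB kBE kB_predE _.
  apply: (PowP _ _ _ (c_gt0 B mB)) => x; rewrite /phiB kBE kB_predE /=.
  + exact: binom_cdf_pred_le (mB : m <= B)%N (q01 x).
  + move=> q_lt1; exact: binom_cdf_pred_gap_ge (mB : m <= B)%N a_ge0 (q_ge x)
      (qfun_lt1_gap q_lt1).
- apply: (PowP _ _ _ (c_gt0 B (ltnW mB))) => x; rewrite /phiB kBE kB_succE.
  + exact: binom_cdf_succ_le (ltnW mB) (q01 x).
  + move=> q_lt1; exact: binom_cdf_succ_gap_ge (ltnW mB) a_ge0 (q_ge x)
      (qfun_lt1_gap q_lt1).
Qed.
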